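(* Let $\sigma>0$, $\eta>0$, $\hat\alpha>0$, $h>0$, $r\ge0$, $a\in\mathbb{R}$, $\beta\ge0$, and let $v_\beta\in C^1[0,\infty)$ be the unique solution of $\frac{\sigma^2}2v'(y)=\beta+\frac{\hat\alpha}4v(y)^2+\eta y(v(y)-\frac h\eta)-av(y)$, $y\ge0$, $v(0)=-r$. If $y>0$ is a local maximizer of $v_\beta$, then $v_\beta(y)\le h/\eta$. *)

From Stdlib Require Import Reals.
From Coquelicot Require Import Coquelicot.
Open Scope R_scope.

Definition ode_rhs (beta ahat eta h a y vy : R) : R :=
  beta + ahat / 4 * vy ^ 2 + eta * y * (vy - h / eta) - a * vy.

(* v is a C^1[0,oo) solution of the ODE on [0,oo) with v(0) = -r:
   two-sided derivative at every y > 0, one-sided (right) derivative at 0,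
   and the ODE holds at every y >= 0.  (Continuity of v' is automatic from
   the ODE, since the right-hand side is continuous in (y, v(y)).) *)
Definition is_ode_solution (sigma eta ahat h r a beta : R) (v : R -> R) : Prop :=
  v 0 = - r /\
  (forall y, 0 < y ->
     is_derive v y (ode_rhs beta ahat eta h a y (v y) / (sigma ^ 2 / 2))) /\
  filterlim (fun t => (v t - v 0) / t) (at_right 0)
    (locally (ode_rhs beta ahat eta h a 0 (v 0) / (sigma ^ 2 / 2))).

Definition local_max_on_nonneg (v : R -> R) (y : R) : Prop :=
  exists delta, 0 < delta /\
    forall z, 0 <= z -> Rabs (z - y) < delta -> v z <= v y.

(** At an interior critical point the ODE forces [v'(y) = 0], and differentiating
    the right-hand side once more gives
    [(sigma^2/2) v''(y) = eta (v(y) - h/eta)], because every term carrying a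
    factor [v'(y)] vanishes.  A local maximum cannot have [v''(y) > 0], hence
    [v(y) <= h/eta]. *)

From Stdlib Require Import Reals Lra.
From Coquelicot Require Import Coquelicot.
Open Scope R_scope.

Lemma local_max_on_nonneg_interior (v : R -> R) (y : R) :
  0 < y -> local_max_on_nonneg v y ->
  exists delta, 0 < delta <= y /\ forall z, Rabs (z - y) < delta -> v z <= v y.
Proof.
  intros Hy [delta [Hdelta Hmax]].
  pose proof (Rmin_l delta y); pose proof (Rmin_r delta y).
  exists (Rmin delta y); split; [split; [now apply Rmin_glb_lt | lra]|].
  intros z Hz.
  apply Rabs_def2 in Hz.
  apply Hmax; [lra|apply Rabs_def1; lra].
Qed.

Lemma local_max_is_derive_0 (f : R -> R) (y l delta : R) :
  0 < delta -> (forall z, Rabs (z - y) < delta -> f z <= f y) ->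
  is_derive f y l -> l = 0.
Proof.
  intros Hdelta Hmax Hf.
  pose (pr := exist (fun l => derivable_pt_lim f y l) l (proj1 (is_derive_Reals f y l) Hf)).
  change (derive_pt f y pr = 0).
  apply (deriv_maximum f (y - delta) (y + delta)); try lra.
  intros z Hz1 Hz2; apply Hmax, Rabs_def1; lra.
Qed.

Lemma is_derive_pos_right (g : R -> R) (y l : R) :
  is_derive g y l -> 0 < l ->
  exists d, 0 < d /\ forall z, y < z < y + d -> g y < g z.
Proof.
  intros Hg Hl.
  apply is_derive_Reals in Hg.
  destruct (Hg (l / 2) ltac:(lra)) as [[d Hd] Hquot].
  exists d; split; [exact Hd|].
  intros z Hz.
  assert (Hk : 0 < z - y) by lra.
  specialize (Hquot (z - y) (Rgt_not_eq _ _ Hk) ltac:(simpl; rewrite Rabs_right; lra)).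
  replace (y + (z - y)) with z in Hquot by ring.
  apply Rabs_def2 in Hquot.
  assert (Hslope : 0 < (g z - g y) / (z - y)) by lra.
  assert (Hdiff : g z - g y = (g z - g y) / (z - y) * (z - y)) by (field; apply Rgt_not_eq, Hk).
  nra.
Qed.

Lemma local_max_second_derive_le0 (f g : R -> R) (y l delta : R) :
  0 < delta ->
  (forall z, Rabs (z - y) < delta -> is_derive f z (g z)) ->
  (forall z, Rabs (z - y) < delta -> f z <= f y) ->
  is_derive g y l -> l <= 0.
Proof.
  intros Hdelta Hf Hmax Hg.
  assert (Hcrit : g y = 0).
  { apply (local_max_is_derive_0 f y (g y) delta Hdelta Hmax), Hf.
    now rewrite Rminus_diag, Rabs_R0. }
  destruct (Rle_or_lt l 0) as [Hle|Hpos]; [exact Hle|exfalso].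
  destruct (is_derive_pos_right g y l Hg Hpos) as [d [Hd Hgpos]].
  pose (z := y + Rmin d delta / 2).
  assert (Hmin := Rmin_glb_lt d delta 0 Hd Hdelta).
  pose proof (Rmin_l d delta); pose proof (Rmin_r d delta).
  assert (Hnear : forall t, y <= t <= z -> Rabs (t - y) < delta)
    by (intros t Ht; unfold z in Ht; rewrite Rabs_right; lra).
  destruct (MVT_cor2 f g y z ltac:(unfold z; lra)) as [xi [Hmvt Hxi]].
  { intros t Ht; apply is_derive_Reals, Hf, Hnear, Ht. }
  assert (Hgxi : 0 < g xi) by (rewrite <- Hcrit; apply Hgpos; unfold z in Hxi; lra).
  assert (Hfz : f z <= f y) by (apply Hmax, Hnear; lra).
  assert (Hzy : 0 < z - y) by (unfold z; lra).
  nra.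
Qed.

Lemma is_derive_ode_rhs (beta ahat eta h a : R) (v : R -> R) (y dv : R) :
  is_derive v y dv ->
  is_derive (fun z => ode_rhs beta ahat eta h a z (v z)) y
    (eta * (v y - h / eta) + (ahat / 2 * v y + eta * y - a) * dv).
Proof.
  intros Hv; unfold ode_rhs.
  auto_derive.
  - assert (ex_derive v y) by now exists dv.
    tauto.
  - replace (Derive (fun z => v z) y) with dv by (symmetry; now apply is_derive_unique).
    lra.
Qed.

Theorem lemma9 (sigma eta ahat h r a beta : R) (v : R -> R) (y : R) :
  0 < sigma -> 0 < eta -> 0 < ahat -> 0 < h -> 0 <= r -> 0 <= beta ->
  is_ode_solution sigma eta ahat h r a beta v ->
  0 < y -> local_max_on_nonneg v y ->
  v y <= h / eta.
Proof.
  intros Hsigma Heta _ _ _ _ [_ [Hderiv _]] Hy Hlocmax.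
  set (c := sigma ^ 2 / 2).
  assert (Hc : 0 < c) by (unfold c; nra).
  set (G := fun z => ode_rhs beta ahat eta h a z (v z) / c).
  destruct (local_max_on_nonneg_interior v y Hy Hlocmax) as [delta [[Hdelta Hdelta_y] Hmax]].
  assert (Hv' : forall z, Rabs (z - y) < delta -> is_derive v z (G z))
    by (intros z Hz; apply Hderiv; apply Rabs_def2 in Hz; lra).
  assert (Hvy : is_derive v y (G y)) by exact (Hderiv y Hy).
  assert (Hcrit : G y = 0) by exact (local_max_is_derive_0 v y (G y) delta Hdelta Hmax Hvy).
  assert (Hv'' : is_derive G y (eta * (v y - h / eta) / c)).
  { pose proof (is_derive_ode_rhs beta ahat eta h a v y (G y) Hvy) as Hrhs.
    rewrite Hcrit, Rmult_0_r, Rplus_0_r in Hrhs.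
    (* [G] is [fun z => ode_rhs .. z (v z) * / c] up to unfolding [Rdiv]. *)
    exact (is_derive_scal_l _ _ _ (/ c) Hrhs). }
  apply Rnot_lt_le; intros Hgt.
  assert (0 < eta * (v y - h / eta) / c)
    by (apply Rdiv_lt_0_compat; [apply Rmult_lt_0_compat|]; lra).
  pose proof (local_max_second_derive_le0 v G y _ delta Hdelta Hv' Hmax Hv'').
  lra.
Qed.
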